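(* Let $s,\Delta_s$ be positive integers and $G$ an undirected graph. There exists an $(s,\Delta_s)$-dissolution for $G$ if and only if there exists a $(\Delta_s,s)$-dissolution for $G$.
   Context: For $V'\subseteq V(G)$ let $Z(V',G):=\{(x,y)\mid x\in V',\ y\in V(G)\setminus V',\ \{x,y\}\in E(G)\}$. For positive integers $s,\Delta_s$, an $(s,\Delta_s)$-dissolution for $G$ is a pair $(D,z)$ with $D\subset V(G)$ and $z\colon Z(D,G)\to\{0,\dots,s\}$ such that (a) each $v'\in D$ satisfies $\sum_{(v',v)\in Z(D,G)} z(v',v)=s$, and (b) each $v\in V(G)\setminus D$ satisfies $\sum_{(v',v)\in Z(D,G)} z(v',v)=\Delta_s$. *)

From mathcomp Require Import all_boot.
Set Implicit Arguments. Unset Strict Implicit. Unset Printing Implicit Defensive.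

Definition simple_graph (T : finType) (e : rel T) : Prop :=
  symmetric e /\ irreflexive e.

Definition inZ (T : finType) (e : rel T) (D : {set T}) (x y : T) : bool :=
  [&& x \in D, y \notin D & e x y].

(* (s, ds)-dissolution (D, z).  The map z : Z(D,G) -> {0,...,s} is
   represented by a total function T -> T -> nat whose values matter only
   on Z(D,G), where they are required to lie in {0,...,s}. *)
Definition dissolution (T : finType) (e : rel T) (s ds : nat)
    (D : {set T}) (z : T -> T -> nat) : Prop :=
  [/\ D \subset [set: T],
      (forall x y, inZ e D x y -> z x y <= s),
      (forall v', v' \in D -> \sum_(v | inZ e D v' v) z v' v = s)
    & (forall v, v \notin D -> \sum_(v' | inZ e D v' v) z v' v = ds)].

From mathcomp Require Import all_boot.

(* Complementing D and transposing z turns an (s, ds)-dissolution into a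
   (ds, s)-dissolution: for a symmetric edge relation, Z(~D) is Z(D) with
   each pair reversed, so the two families of sum conditions swap roles. *)

Lemma inZ_setC (T : finType) (e : rel T) (D : {set T}) (x y : T) :
  symmetric e -> inZ e (~: D) x y = inZ e D y x.
Proof.
move=> e_sym; rewrite /inZ !inE negbK e_sym.
by case: (x \in D); case: (y \in D).
Qed.

Lemma dissolution_setC (T : finType) (e : rel T) (s ds : nat)
    (D : {set T}) (z : T -> T -> nat) :
  symmetric e -> dissolution e s ds D z ->
  dissolution e ds s (~: D) (fun x y => z y x).
Proof.
move=> e_sym [_ _ sumD sumDC]; split.
- exact: subsetT.
- move=> x y; rewrite inZ_setC // => Zyx.
  have xD : x \notin D by case/and3P: Zyx.
  (* a single term is bounded by the whole sum at x, which is ds *)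
  by rewrite -(sumDC x xD) (bigD1 y) //= leq_addr.
- move=> x; rewrite inE => xD.
  by rewrite -(sumDC x xD); apply: eq_bigl => y; rewrite inZ_setC.
- move=> y; rewrite inE negbK => yD.
  by rewrite -(sumD y yD); apply: eq_bigl => x; rewrite inZ_setC.
Qed.

Lemma exists_dissolution_swap (T : finType) (e : rel T) (s ds : nat) :
  symmetric e ->
  (exists (D : {set T}) (z : T -> T -> nat), dissolution e s ds D z) ->
  (exists (D : {set T}) (z : T -> T -> nat), dissolution e ds s D z).
Proof.
by move=> e_sym [D [z dz]]; exists (~: D), (fun x y => z y x);
  exact: dissolution_setC.
Qed.

Theorem lemma1 (T : finType) (e : rel T) (s ds : nat) :
  simple_graph e -> 0 < s -> 0 < ds ->
  (exists (D : {set T}) (z : T -> T -> nat), dissolution e s ds D z) <->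
  (exists (D : {set T}) (z : T -> T -> nat), dissolution e ds s D z).
Proof.
by move=> [e_sym _] _ _; split; exact: exists_dissolution_swap.
Qed.
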